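(* Let $A$ and $B$ be $k$-algebras and $\tau\colon B\otimes A\to A\otimes B$ a twisting map. Equip $A$, $B$ and $A\otimes_\tau B$ with their cofinite topologies. Then the linear isomorphism $A\otimes^! B\to A\otimes_\tau B$ given by the identity on the underlying vector space $A\otimes B$ is continuous.
   Context: $k$ is a field (discrete topology). All algebras are unital associative. For an algebra $R$, $\mathcal F(R)$ is the set of two-sided ideals of finite codimension, and the cofinite topology on $R$ is the linear topology whose open subspaces are those containing some element of $\mathcal F(R)$. For linearly topologized spaces $E,F$, $E\otimes^!F$ is $E\otimes F$ with the linear topology whose open subspaces are those containing $E_0\otimes F+E\otimes F_0$ for some open subspaces $E_0\subseteq E$, $F_0\subseteq F$. A linear map $\tau\colon B\otimes A\to A\otimes B$ is a twisting map if the multiplication $m_\tau=(m_A\otimes m_B)\circ(\mathrm{id}_A\otimes\tau\otimes\mathrm{id}_B)$ on $A\otimes B$ is associative with identity $1_A\otimes 1_B$; the resulting algebra is the twisted tensor product $A\otimes_\tau B$, and $a\mapsto a\otimes 1$, $b\mapsto 1\otimes b$ are algebra homomorphisms into it. *)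

From HB Require Import structures.
From mathcomp Require Import all_boot all_order all_algebra.
Set Implicit Arguments. Unset Strict Implicit. Unset Printing Implicit Defensive.
Import GRing.Theory.
Local Open Scope ring_scope.

Section Defs.
Variable k : fieldType.

Definition is_subspace (V : lmodType k) (U : V -> Prop) : Prop :=
  U 0 /\ forall (c : k) (x y : V), U x -> U y -> U (c *: x + y).

Definition subpred (V : Type) (U W : V -> Prop) : Prop := forall x, U x -> W x.

Definition span_of (V : lmodType k) (S : V -> Prop) : V -> Prop :=
  fun v => forall U : V -> Prop, is_subspace U -> subpred S U -> U v.

Definition fin_codim (V : lmodType k) (U : V -> Prop) : Prop :=
  exists (n : nat) (e : 'I_n -> V), forall v : V,
    exists c : 'I_n -> k, U (v - \sum_(i < n) c i *: e i).

Definition cofinite_ideal (V : lmodType k) (mul : V -> V -> V) (I : V -> Prop)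
  : Prop :=
  [/\ is_subspace I, (forall x y, I y -> I (mul x y) /\ I (mul y x))
    & fin_codim I].

Definition cofinite_open (V : lmodType k) (mul : V -> V -> V) (U : V -> Prop)
  : Prop :=
  is_subspace U /\ exists I, cofinite_ideal mul I /\ subpred I U.

Definition is_linear (U V : lmodType k) (f : U -> V) : Prop :=
  forall (c : k) (x y : U), f (c *: x + y) = c *: f x + f y.

Definition is_bilinear (A B V : lmodType k) (f : A -> B -> V) : Prop :=
  (forall b, is_linear (fun a => f a b)) /\ (forall a, is_linear (f a)).

Definition is_tensor_product (A B T : lmodType k) (t : A -> B -> T) : Prop :=
  is_bilinear t /\
  forall (V : lmodType k) (f : A -> B -> V), is_bilinear f ->
    exists! g : T -> V, is_linear g /\ forall a b, g (t a b) = f a b.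

(* open subspaces of A (x)^! B, where A and B carry their cofinite
   topologies: subspaces containing E0 (x) B + A (x) F0 = span of the
   t a b with a in E0 or b in F0, for open E0, F0 *)
Definition bang_open (A B : algType k) (T : lmodType k) (t : A -> B -> T)
  (U : T -> Prop) : Prop :=
  is_subspace U /\
  exists (E0 : A -> Prop) (F0 : B -> Prop),
    [/\ cofinite_open *%R E0, cofinite_open *%R F0 &
        subpred (span_of (fun v => exists a b, v = t a b /\ (E0 a \/ F0 b))) U].

(* [mul] is the multiplication m_tau = (m_A (x) m_B) o (id (x) tau (x) id)
   on T = A (x) B: it is bilinear and on pure tensors
   m_tau (a(x)b, a'(x)b') = (L_{a,b'} o tau)(b (x) a'), where L_{a,b'} is the
   linear map x (x) y |-> a x (x) y b'. *)
Definition is_twisted_mul (A B : algType k) (T T' : lmodType k)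
  (t : A -> B -> T) (t' : B -> A -> T') (tau : T' -> T)
  (mul : T -> T -> T) : Prop :=
  is_bilinear mul /\
  forall (a : A) (b : B) (a' : A) (b' : B) (L : T -> T),
    is_linear L -> (forall x y, L (t x y) = t (a * x) (y * b')) ->
    mul (t a b) (t a' b') = L (tau (t' b a')).

Definition is_twisting_map (A B : algType k) (T T' : lmodType k)
  (t : A -> B -> T) (t' : B -> A -> T') (tau : T' -> T)
  (mul : T -> T -> T) : Prop :=
  [/\ is_linear tau, is_twisted_mul t t' tau mul,
      (forall x y z, mul x (mul y z) = mul (mul x y) z)
    & forall x, mul (t 1 1) x = x /\ mul x (t 1 1) = x].

Definition lin_continuous (X Y : lmodType k) (openX : (X -> Prop) -> Prop)
  (openY : (Y -> Prop) -> Prop) (f : X -> Y) : Prop :=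
  forall U : Y -> Prop, openY U -> openX (fun x => U (f x)).

End Defs.

From mathcomp Require Import all_boot all_order all_algebra.
From Stdlib Require Import Classical.
Set Implicit Arguments. Unset Strict Implicit. Unset Printing Implicit Defensive.
Import GRing.Theory.
Local Open Scope ring_scope.

(** Given an ideal [I] of finite codimension of [A ⊗_τ B], pull it back along
   the algebra homomorphisms [a ↦ a ⊗ 1] and [b ↦ 1 ⊗ b]: this gives ideals
   [E0] of [A] and [F0] of [B], again of finite codimension, since a linear
   preimage of a finite-codimensional subspace has finite codimension. As
   [a ⊗ b = (a ⊗ 1)(1 ⊗ b)] in [A ⊗_τ B], every [a ⊗ b] with [a ∈ E0] or
   [b ∈ F0] lies in [I], hence [E0 ⊗ B + A ⊗ F0 ⊆ I]. *)

Section LinearAlgebra.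
Variable k : fieldType.

Section LinearMap.
Variables (V W : lmodType k) (f : V -> W).
Hypothesis f_lin : is_linear f.

Lemma is_linear0 : f 0 = 0.
Proof.
apply: (@addrI _ (f 0)); rewrite addr0.
by have := f_lin 1 0 0; rewrite scale1r addr0 scale1r => <-.
Qed.

Lemma is_linearZ c x : f (c *: x) = c *: f x.
Proof. by have := f_lin c x 0; rewrite !addr0 is_linear0 addr0. Qed.

Lemma is_linearB x y : f (x - y) = f x - f y.
Proof. by have := f_lin (-1) y x; rewrite !scaleN1r addrC => ->; rewrite addrC. Qed.

End LinearMap.

Section Subspace.
Variables (V : lmodType k) (U : V -> Prop).
Hypothesis U_sub : is_subspace U.

Lemma is_subspaceD x y : U x -> U y -> U (x + y).
Proof. by case: U_sub => _ UZD Ux Uy; have := UZD 1 x y Ux Uy; rewrite scale1r. Qed.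

Lemma is_subspaceZ c x : U x -> U (c *: x).
Proof. by case: U_sub => U0 UZD Ux; have := UZD c x 0 Ux U0; rewrite addr0. Qed.

Lemma is_subspaceB x y : U x -> U y -> U (x - y).
Proof. by move=> Ux Uy; rewrite -scaleN1r; apply/is_subspaceD/is_subspaceZ. Qed.

Lemma span_of_min (S : V -> Prop) :
  (forall v, S v -> U v) -> forall v, span_of S v -> U v.
Proof. by move=> SU v; apply. Qed.

End Subspace.

Lemma is_subspace_preim (V W : lmodType k) (f : V -> W) (U : W -> Prop) :
  is_linear f -> is_subspace U -> is_subspace (fun v => U (f v)).
Proof.
move=> f_lin [U0 UZD]; split=> [|c x y Ux Uy]; first by rewrite is_linear0.
by rewrite f_lin; apply: UZD.
Qed.

Definition add_line (V : lmodType k) (U : V -> Prop) (e : V) : V -> Prop :=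
  fun v => exists d : k, U (v - d *: e).

Lemma is_subspace_add_line (V : lmodType k) (U : V -> Prop) (e : V) :
  is_subspace U -> is_subspace (add_line U e).
Proof.
move=> U_sub; split; first by exists 0; rewrite scale0r subr0; case: U_sub.
move=> c x y [dx Ux] [dy Uy]; exists (c * dx + dy).
rewrite scalerDl opprD addrACA -scalerA -scalerBr.
by case: U_sub => _; apply.
Qed.

Lemma fin_codim_cons (V : lmodType k) (U : V -> Prop) m (g : 'I_m -> V)
    (v0 : V) :
  (forall v, exists (d : k) (c : 'I_m -> k),
     U (v - d *: v0 - \sum_(i < m) c i *: g i)) ->
  fin_codim U.
Proof.
move=> Ug; exists m.+1, (fun j => if unlift ord0 j is Some i then g i else v0).
move=> v; have [d [c Uv]] := Ug v.
exists (fun j => if unlift ord0 j is Some i then c i else d).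
rewrite big_ord_recl unlift_none.
under eq_bigr => i _ do rewrite liftK.
by rewrite opprD addrA.
Qed.

Section Preimage.
Variables (V W : lmodType k) (f : V -> W).
Hypothesis f_lin : is_linear f.

(* Case on [w ∈ f(V) + U]: if so, a preimage [v0] of [w] modulo [U] joins the
   generators; if not, [w] has coefficient 0 in every decomposition of [f v]. *)
Lemma fin_codim_preim_add_line (U : W -> Prop) (w : W) :
  is_subspace U -> fin_codim (fun v => add_line U w (f v)) ->
  fin_codim (fun v => U (f v)).
Proof.
move=> U_sub [m [g Ug]].
have [[v0 Uv0]|w_notin] := classic (exists v0, U (f v0 - w)).
  apply: (@fin_codim_cons _ _ _ g v0) => v; have [c [d Ud]] := Ug v.
  exists d, c; have := is_subspaceB U_sub Ud (is_subspaceZ U_sub d Uv0).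
  rewrite !(is_linearB f_lin) (is_linearZ f_lin) scalerBr opprB addrA subrK.
  by rewrite addrAC.
exists m, g => v; have [c [d Ud]] := Ug v; exists c.
have [d0|d_neq0] := eqVneq d 0; first by rewrite d0 scale0r subr0 in Ud.
case: w_notin; exists (d^-1 *: (v - \sum_(i < m) c i *: g i)).
have := is_subspaceZ U_sub d^-1 Ud.
by rewrite scalerBr scalerA mulVf // scale1r (is_linearZ f_lin).
Qed.

Lemma fin_codim_preim_span n (U : W -> Prop) (e : 'I_n -> W) :
  is_subspace U ->
  (forall v, exists c : 'I_n -> k, U (f v - \sum_(i < n) c i *: e i)) ->
  fin_codim (fun v => U (f v)).
Proof.
elim: n U e => [|n IHn] U e U_sub Ue.
  exists 0%N, (fun _ => 0) => v; exists (fun _ => 0).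
  by have [c] := Ue v; rewrite !big_ord0 !subr0.
apply: (@fin_codim_preim_add_line _ (e ord0)) => //.
apply: (IHn _ (fun i => e (lift ord0 i))) => [|v].
  exact: is_subspace_add_line.
have [c Uc] := Ue v; exists (fun i => c (lift ord0 i)), (c ord0).
by move: Uc; rewrite big_ord_recl opprD addrA addrAC.
Qed.

Lemma fin_codim_preim (U : W -> Prop) :
  is_subspace U -> fin_codim U -> fin_codim (fun v => U (f v)).
Proof. by move=> U_sub [n [e Ue]]; apply: (fin_codim_preim_span U_sub). Qed.

End Preimage.

Lemma cofinite_ideal_preim (V W : lmodType k) (mulV : V -> V -> V)
    (mulW : W -> W -> W) (f : V -> W) (I : W -> Prop) :
  is_linear f -> {morph f : x y / mulV x y >-> mulW x y} ->
  cofinite_ideal mulW I -> cofinite_ideal mulV (fun v => I (f v)).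
Proof.
move=> f_lin f_mul [I_sub I_ideal I_codim]; split.
- exact: is_subspace_preim.
- by move=> x y Iy; rewrite !f_mul; apply: I_ideal.
- exact: fin_codim_preim.
Qed.

Lemma cofinite_ideal_open (V : lmodType k) (mul : V -> V -> V) (I : V -> Prop) :
  cofinite_ideal mul I -> cofinite_open mul I.
Proof. by move=> I_ideal; split; [case: I_ideal | exists I; split]. Qed.

End LinearAlgebra.

Section TwistedTensorProduct.
Variables (k : fieldType) (A B : algType k) (T T' : lmodType k).
Variables (t : A -> B -> T) (t' : B -> A -> T') (tau : T' -> T).
Variable mul : T -> T -> T.
Hypothesis t_tensor : is_tensor_product t.
Hypothesis tau_twisting : is_twisting_map t t' tau mul.

Lemma twisted_mul_pure a b a' b' x y :
  tau (t' b a') = t x y -> mul (t a b) (t a' b') = t (a * x) (y * b').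
Proof.
have [[t_linl t_linr] t_univ] := t_tensor.
have [_ [_ mulE] _ _] := tau_twisting.
have outer_bilin : is_bilinear (fun (u : A) (v : B) => t (a * u) (v * b')).
  split=> [v c u1 u2 | u c v1 v2] /=.
    by rewrite mulrDr -scalerAr t_linl.
  by rewrite mulrDl -scalerAl t_linr.
have [L [[L_lin LE] _]] := t_univ _ _ outer_bilin.
by rewrite (mulE _ _ _ _ _ L_lin LE) => ->; rewrite LE.
Qed.

Lemma tau_pure_1l a : tau (t' 1 a) = t a 1.
Proof.
have [_ [_ mulE] _ unit] := tau_twisting.
rewrite -[RHS](unit _).1 (mulE _ _ _ _ id) // => x y.
by rewrite mul1r mulr1.
Qed.

Lemma tau_pure_r1 b : tau (t' b 1) = t 1 b.
Proof.
have [_ [_ mulE] _ unit] := tau_twisting.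
rewrite -[RHS](unit _).2 (mulE _ _ _ _ id) // => x y.
by rewrite mul1r mulr1.
Qed.

Lemma twisted_mul_inl a a' : mul (t a 1) (t a' 1) = t (a * a') 1.
Proof. by rewrite (twisted_mul_pure _ _ (tau_pure_1l a')) mulr1. Qed.

Lemma twisted_mul_inr b b' : mul (t 1 b) (t 1 b') = t 1 (b * b').
Proof. by rewrite (twisted_mul_pure _ _ (tau_pure_r1 b)) mulr1. Qed.

Lemma twisted_mul_inl_inr a b : mul (t a 1) (t 1 b) = t a b.
Proof. by rewrite (twisted_mul_pure _ _ (tau_pure_1l 1)) mulr1 mul1r. Qed.

Section Ideal.
Variable I : T -> Prop.
Hypothesis I_ideal : cofinite_ideal mul I.

Lemma cofinite_ideal_inl : cofinite_ideal *%R (fun a => I (t a 1)).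
Proof.
apply: cofinite_ideal_preim I_ideal; first exact: t_tensor.1.1.
by move=> a a'; rewrite twisted_mul_inl.
Qed.

Lemma cofinite_ideal_inr : cofinite_ideal *%R (fun b => I (t 1 b)).
Proof.
apply: cofinite_ideal_preim I_ideal; first exact: t_tensor.1.2.
by move=> b b'; rewrite twisted_mul_inr.
Qed.

Lemma span_pure_sub_ideal v :
  span_of (fun w => exists a b, w = t a b /\ (I (t a 1) \/ I (t 1 b))) v -> I v.
Proof.
have [I_sub I_mul _] := I_ideal.
apply: span_of_min => // _ [a [b [-> [Ia|Ib]]]]; rewrite -twisted_mul_inl_inr.
  exact: (I_mul _ _ Ia).2.
exact: (I_mul _ _ Ib).1.
Qed.

End Ideal.

End TwistedTensorProduct.

Theorem lemma3p3 (k : fieldType) (A B : algType k) (T T' : lmodType k)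
  (t : A -> B -> T) (t' : B -> A -> T') (tau : T' -> T) (mul : T -> T -> T) :
  is_tensor_product t -> is_tensor_product t' ->
  is_twisting_map t t' tau mul ->
  lin_continuous (bang_open t) (cofinite_open mul) id.
Proof.
move=> t_tensor _ tau_twisting U [U_sub [I [I_ideal IU]]].
split=> //; exists (fun a => I (t a 1)), (fun b => I (t 1 b)); split.
- exact/cofinite_ideal_open/(cofinite_ideal_inl t_tensor tau_twisting I_ideal).
- exact/cofinite_ideal_open/(cofinite_ideal_inr t_tensor tau_twisting I_ideal).
- by move=> v /(span_pure_sub_ideal t_tensor tau_twisting I_ideal)/IU.
Qed.
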